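(* Let $n$ and $k$ be odd integers with $k\ge 3$ and $n>2k+1$. Then there is a homomorphism $\mathrm{Pet}(n,k)\to C_n^{\,k}$.
   Context: For integers $n,k$ with $2<2k\le n$, the generalized Petersen graph $\mathrm{Pet}(n,k)$ has vertex set $\{u_0,\dots,u_{n-1}\}\cup\{v_0,\dots,v_{n-1}\}$ and edge set $\{u_iu_{i+1}\}\cup\{u_iv_i\}\cup\{v_iv_{i+k}\}$, indices modulo $n$. $C_n$ is the cycle of length $n$. For a graph $G$ and positive integer $m$, the power graph $G^m$ has vertex set $V(G)$, two distinct vertices being adjacent iff there is a walk of length exactly $m$ between them in $G$. A homomorphism $G\to H$ is a map $V(G)\to V(H)$ sending edges to edges. *)

From mathcomp Require Import all_boot.
Unset Printing Implicit Defensive.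

Definition cycle_graph (n : nat) : rel 'I_n :=
  fun i j => (j == (i.+1 %% n) :> nat) || (i == (j.+1 %% n) :> nat).

(* Generalized Petersen graph Pet(n,k): vertex (false, i) is u_i,
   vertex (true, i) is v_i. *)
Definition petersen (n k : nat) : rel (bool * 'I_n) :=
  fun x y =>
    match x, y with
    | (false, i), (false, j) =>
        (j == (i.+1 %% n) :> nat) || (i == (j.+1 %% n) :> nat)
    | (false, i), (true, j) | (true, i), (false, j) => i == j
    | (true, i), (true, j) =>
        (j == ((i + k) %% n) :> nat) || (i == ((j + k) %% n) :> nat)
    end.

Definition walk_len (T : Type) (e : rel T) (m : nat) (x y : T) : Prop :=
  exists s : seq T, size s = m /\ path e x s /\ last x s = y.

Definition power_graph (T : eqType) (e : rel T) (m : nat) (x y : T) : Prop :=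
  x != y /\ walk_len T e m x y.

Definition graph_hom (A B : Type) (eA : A -> A -> Prop) (eB : B -> B -> Prop)
  (f : A -> B) : Prop :=
  forall x y, eA x y -> eB (f x) (f y).

(** Send [u_i] to [i] and [v_i] to [i + 1]. Every edge of [Pet(n,k)] then
    joins two vertices of [C_n] at cyclic distance [1] or [k]. Both are
    adjacent in [C_n^k]: a walk of length [k] covers distance [k] directly,
    and distance [1] by one step followed by [(k - 1)/2] back-and-forth
    detours, since [k] is odd. Distance [0] never occurs because [k < n]. *)

From mathcomp Require Import all_boot.
From mathcomp Require Import zify.

Section Walks.
Variables (T : Type) (e : rel T).

Lemma walk_len_cat m p x y z :
  walk_len T e m x y -> walk_len T e p y z -> walk_len T e (m + p) x z.
Proof.
move=> [s [sz [es ls]]] [t [tz [et lt]]]; exists (s ++ t).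
by rewrite size_cat sz tz cat_path last_cat ls es et lt.
Qed.

Hypothesis e_sym : symmetric e.

Lemma walk_len_rev m x y : walk_len T e m x y -> walk_len T e m y x.
Proof.
move=> [s [sz [es ls]]]; exists (rev (belast x s)); split.
  by rewrite size_rev size_belast.
split.
  by rewrite -ls rev_path; apply: sub_path es => a b /=; rewrite e_sym.
by case: s {sz es} ls => [|a s] /= <- //; rewrite rev_cons last_rcons.
Qed.

Lemma walk_len_detour m x y z :
  e y z -> walk_len T e m x y -> walk_len T e (m + 2) x y.
Proof.
move=> eyz wxy; apply: walk_len_cat wxy _.
by exists [:: z; y]; rewrite /= eyz e_sym eyz.
Qed.

End Walks.

Lemma power_graph_sym (T : eqType) (e : rel T) m x y :
  symmetric e -> power_graph T e m x y -> power_graph T e m y x.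
Proof.
by move=> e_sym [xy wxy]; split; [rewrite eq_sym | apply: walk_len_rev].
Qed.

Section Cycle.
Variable n : nat.
Local Notation C := (cycle_graph n).

Lemma cycle_graph_sym : symmetric C.
Proof. by move=> i j; rewrite /cycle_graph orbC. Qed.

Lemma cycle_graph_ordS (i : 'I_n) : C i (ordS i).
Proof. by rewrite /cycle_graph eqxx. Qed.

Lemma cycle_walk_shift d (x y : 'I_n) :
  val y = (x + d) %% n -> walk_len _ C d x y.
Proof.
elim: d x => [|d IHd] x yE.
  have -> : y = x by apply: val_inj; rewrite yE addn0 modn_small.
  by exists [::].
rewrite -add1n; apply: (@walk_len_cat _ _ 1 d x (ordS x)).
  by exists [:: ordS x]; rewrite /= cycle_graph_ordS.
by apply: IHd; rewrite yE /= modnDml addSnnS.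
Qed.

Lemma cycle_walk_pad m j (x y : 'I_n) :
  walk_len _ C m x y -> walk_len _ C (m + j.*2) x y.
Proof.
move=> wxy; elim: j => [|j IHj]; first by rewrite addn0.
rewrite doubleS -addn2 addnA.
exact: walk_len_detour cycle_graph_sym _ _ _ _ (cycle_graph_ordS y) IHj.
Qed.

Lemma cycle_shift_neq d (x y : 'I_n) :
  0 < d < n -> val y = (x + d) %% n -> x != y.
Proof.
case/andP=> d_gt0 d_lt_n yE; apply/eqP => xy.
have : x + 0 == x + d %[mod n] by rewrite -yE xy addn0 modn_small.
by rewrite eqn_modDl mod0n modn_small // eq_sym (gtn_eqF d_gt0).
Qed.

Lemma cycle_power_shift m d (x y : 'I_n) :
  d <= m -> ~~ odd (m - d) -> 0 < d < n -> val y = (x + d) %% n ->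
  power_graph _ C m x y.
Proof.
move=> d_le_m even_md dn yE; split; first exact: cycle_shift_neq dn yE.
rewrite -(subnKC d_le_m) -[m - d]odd_double_half (negbTE even_md) add0n.
exact/cycle_walk_pad/cycle_walk_shift.
Qed.

Lemma ordS_shift d (x y : 'I_n) :
  val y = (x + d) %% n -> val (ordS y) = (ordS x + d) %% n.
Proof. by move=> /= ->; rewrite -[_.+1]addn1 !modnDml addn1 addSn. Qed.

End Cycle.

Theorem theorem5 (n k : nat) :
  odd n -> odd k -> 3 <= k -> 2 * k + 1 < n ->
  exists f : bool * 'I_n -> 'I_n,
    graph_hom (bool * 'I_n) 'I_n (fun x y => petersen n k x y)
              (power_graph _ (cycle_graph n) k) f.
Proof.
move=> _ odd_k k_ge3 k_lt_n.
set G := power_graph _ (cycle_graph n) k.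
have adj d (x y : 'I_n) :
    d = 1 \/ d = k -> val y = (x + d) %% n -> G x y /\ G y x.
  move=> dk yE.
  have xy : G x y.
    apply: cycle_power_shift yE; case: dk => ->;
      by rewrite ?subnn ?oddB ?odd_k //; lia.
  by split=> //; apply: power_graph_sym (@cycle_graph_sym n) xy.
have adj1 (i : 'I_n) : G i (ordS i) /\ G (ordS i) i.
  by apply: (adj 1); [left | rewrite addn1].
exists (fun v => if v.1 then ordS v.2 else v.2).
move=> [[] i] [[] j] /=.
- case/orP=> /eqP /ordS_shift shift;
    by have [] := adj k _ _ (or_intror erefl) shift.
- by move/eqP <-; case: (adj1 i).
- by move/eqP <-; case: (adj1 i).
- case/orP=> /eqP; rewrite -addn1 => shift;
    by have [] := adj 1 _ _ (or_introl erefl) shift.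
Qed.
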